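(* Let $X$ be a topological space and let $\mathcal C=\mathcal C(\mathcal A)$ be the epireflective subcategory of $\mathbf{Top}$ generated by a class of spaces $\mathcal A$. If $A$ is an $\mathcal A$-embedded subspace of $X$, then the epireflection functor associated to $\mathcal C$ preserves the subspace $A\hookrightarrow X$.
   Context: $\mathcal C(\mathcal A)$ is the class of spaces homeomorphic to subspaces of products of spaces in $\mathcal A$; each space $Z$ has a reflection $\mathrm{r}_{\mathcal C}Z\in\mathcal C$ with a universal continuous surjection $\mathrm{r}_{(Z,\mathcal C)}\colon Z\to\mathrm{r}_{\mathcal C}Z$, and $\mathrm{r}_{\mathcal C}(f)$ denotes the induced map of a continuous $f$. The epireflection preserves the subspace $A\hookrightarrow X$ (inclusion $i$) if $\mathrm{r}_{\mathcal C}(i)\colon\mathrm{r}_{\mathcal C}A\to\mathrm{r}_{\mathcal C}X$ is a homeomorphism onto a subspace of $\mathrm{r}_{\mathcal C}X$. A subset $A$ of $X$ is $\mathcal A$-embedded if for every continuous $f\colon A\to Z$ with $Z\in\mathcal A$ there exist $Y\in\mathcal A$ with $Z\subseteq Y$ and a continuous $\overline f\colon X\to Y$ with $\overline f|_A=f$. *)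

From HB Require Import structures.
From mathcomp Require Import all_boot all_algebra.
From mathcomp Require Import all_classical all_reals topology.
Set Implicit Arguments. Unset Strict Implicit. Unset Printing Implicit Defensive.
Local Open Scope classical_set_scope.

Definition space_class := topologicalType -> Prop.

Definition embedding {S T : topologicalType} (e : S -> T) : Prop :=
  injective e /\ continuous e /\
  (forall U : set S, open U -> exists V : set T, open V /\ U = e @^-1` V).

Definition in_C (cA : space_class) (Z : topologicalType) : Prop :=
  exists (I : Type) (T : I -> topologicalType)
         (e : Z -> prod_topology (fun i => T i)),
    (forall i, cA (T i)) /\ embedding e.

Definition is_reflection (cA : space_class) (Z R : topologicalType)
  (r : Z -> R) : Prop :=
  in_C cA R /\ continuous r /\ (forall y : R, exists x : Z, r x = y) /\
  (forall (W : topologicalType) (g : Z -> W), in_C cA W -> continuous g ->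
     exists! h : R -> W, continuous h /\ h \o r = g).

(* A (a subset of X, with the subspace topology on [set_type A]) is
   𝒜-embedded in X. "Z ⊆ Y" is read as: Z is a subspace of Y via an embedding e. *)
Definition A_embedded (cA : space_class) (X : topologicalType) (A : set X)
  : Prop :=
  forall (Z : topologicalType) (f : set_type A -> Z), cA Z -> continuous f ->
    exists (Y : topologicalType) (e : Z -> Y) (fb : X -> Y),
      cA Y /\ embedding e /\ continuous fb /\
      (forall a : set_type A, fb (set_val a) = e (f a)).

From HB Require Import structures.
From mathcomp Require Import all_boot all_algebra.
From mathcomp Require Import all_classical all_reals topology.
Local Open Scope classical_set_scope.

(* Embed r_C A into a product of spaces T_i of 𝒜. Precomposed with the
   reflection of A, each coordinate r_C A -> T_i is a map on A, which by
   𝒜-embeddedness extends to X with values in some Y_i ∈ 𝒜 containing T_i,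
   and hence factors through r_C X. So every coordinate of the embedding of
   r_C A factors through r_C(i) up to an embedding T_i ⊆ Y_i, and this forces
   r_C(i) to be an embedding: convergence in r_C A can be read off from the
   coordinates, hence from the images under r_C(i). *)

Definition initial_map {S T : topologicalType} (e : S -> T) : Prop :=
  forall U : set S, open U -> exists V : set T, open V /\ U = e @^-1` V.

Definition cvg_reflecting {S T : topologicalType} (e : S -> T) : Prop :=
  forall (F : set_system S) (x : S), Filter F -> e @ F --> e x -> F --> x.

Lemma initial_map_cvg_reflecting {S T : topologicalType} {e : S -> T} :
  initial_map e -> cvg_reflecting e.
Proof.
move=> einit F x FF eFx U; rewrite nbhsE => -[B [oB Bx] BU].
have [V [oV BV]] := einit B oB; rewrite BV in Bx BU.
by apply: filterS BU _; apply: (eFx V); apply: open_nbhs_nbhs.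
Qed.

Lemma cvg_reflecting_initial_map {S T : topologicalType} {e : S -> T} :
  cvg_reflecting e -> initial_map e.
Proof.
move=> ecvg U oU.
exists (\bigcup_(W in [set W | open W /\ e @^-1` W `<=` U]) W); split.
  by apply: bigcup_open => W [].
rewrite eqEsubset; split => [x Ux|x [W [_ WU] Wx]]; last exact: WU.
pose F := filter_from [set W | open_nbhs (e x) W] (preimage e).
have FF : Filter F.
  apply: filter_from_filter; first by exists setT; split; [exact: openT|].
  move=> W1 W2 [oW1 W1x] [oW2 W2x]; exists (W1 `&` W2) => //.
  by split; [exact: openI|].
have [W [oW Wx] WU] : F U.
  apply: (ecvg F x FF); last by apply: open_nbhs_nbhs.
  move=> N; rewrite nbhsE => -[W oWx WN]; exists W => //.
  by move=> z /WN.
by exists W.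
Qed.

Lemma cvg_prod_topology {I : Type} (K : I -> topologicalType)
    (F : set_system (prod_topology K)) (q : prod_topology K) :
  Filter F -> (forall i, proj i @ F --> q i) -> F --> q.
Proof.
move=> FF Fq; apply/cvg_sup => i U /=.
rewrite (@nbhsE (Topological.Pack _)) => -[B [[C oC CB] Bq] BU].
apply: filterS BU _; rewrite -CB; apply: Fq; apply: open_nbhs_nbhs.
by split => //; rewrite -CB in Bq.
Qed.

Lemma embedding_of_coordinate_factorizations {I : Type}
    {K : I -> topologicalType} {S T : topologicalType}
    {e : S -> prod_topology K} {h : S -> T} :
  embedding e -> continuous h ->
  (forall i, exists (Y : topologicalType) (ey : K i -> Y) (g : T -> Y),
      embedding ey /\ continuous g /\ forall s, g (h s) = ey (e s i)) ->
  embedding h.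
Proof.
move=> [einj [_ einit]] hc factor; split; last split => //.
  move=> x y hxy; apply: einj; apply: functional_extensionality_dep => i.
  have [Y [ey [g [[eyinj _] [_ gh]]]]] := factor i.
  by apply: eyinj; rewrite -!gh hxy.
apply: cvg_reflecting_initial_map => F x FF hFx.
apply: (initial_map_cvg_reflecting einit _ _ FF).
apply: cvg_prod_topology => i.
have [Y [ey [g [[_ [_ eyinit]] [gc gh]]]]] := factor i.
apply: (initial_map_cvg_reflecting eyinit _ _ (fmap_filter _ _)).
move=> P; rewrite -gh => /(continuous_cvg _ (gc (h x)) hFx).
by apply: (@filterS _ F) => s /=; rewrite gh.
Qed.

Lemma in_C_class {cA : space_class} {Y : topologicalType} : cA Y -> in_C cA Y.
Proof.
move=> cAY; exists unit, (fun _ => Y), (fun y _ => y); split => //.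
split; first by move=> y z /(congr1 (proj tt)).
split; first by move=> y; apply: cvg_prod_topology.
move=> U oU; exists (proj tt @^-1` U); split => //.
by apply: open_comp oU => p _; apply: (@proj_continuous unit (fun _ => Y)).
Qed.

Lemma reflection_map_extension {cA : space_class} {X : topologicalType}
    {A : set X} {RA RX : topologicalType} {rA : set_type A -> RA}
    {rX : X -> RX} {h : RA -> RX} :
  A_embedded cA A -> is_reflection cA rA -> is_reflection cA rX ->
  h \o rA = rX \o set_val ->
  forall (Z : topologicalType) (f : RA -> Z), cA Z -> continuous f ->
  exists (Y : topologicalType) (ez : Z -> Y) (g : RX -> Y),
    embedding ez /\ continuous g /\ forall z, g (h z) = ez (f z).
Proof.
move=> Aemb [_ [rAc [rAsurj _]]] [_ [_ [_ rXuniv]]] hrA Z f cAZ fc.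
have frAc : continuous (f \o rA) by move=> a; apply: continuous_comp (rAc a) (fc _).
have [Y [ez [fb [cAY [ezemb [fbc fbA]]]]]] := Aemb Z _ cAZ frAc.
have [g [[gc grX] _]] := rXuniv Y fb (in_C_class cAY) fbc.
exists Y, ez, g; split => //; split => // z.
have [a <-] := rAsurj z.
by rewrite -fbA -grX -[h (rA a)]/((h \o rA) a) hrA.
Qed.

Theorem corollary5p6 (cA : space_class) (X : topologicalType) (A : set X)
  (RA RX : topologicalType) (rA : set_type A -> RA) (rX : X -> RX) :
  A_embedded cA A ->
  is_reflection cA rA -> is_reflection cA rX ->
  forall h : RA -> RX, continuous h -> h \o rA = rX \o set_val ->
    embedding h.
Proof.
move=> Aemb reflA reflX h hc hrA.
have [[I [T [e [TA eemb]]]] _] := reflA.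
apply: (embedding_of_coordinate_factorizations eemb hc) => i.
apply: (reflection_map_extension Aemb reflA reflX hrA _ _ (TA i)).
have [_ [ec _]] := eemb.
by move=> z; apply: continuous_comp (ec z) (@proj_continuous {classic I} T i _).
Qed.
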